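(* (a) Suppose $d>c>0$ and $a,b,\delta>0$. Then the function \[ x\mapsto {}_2F_1(a,b;c+\delta;x)\,{}_2F_1(a,b;d;x)-{}_2F_1(a,b;d+\delta;x)\,{}_2F_1(a,b;c;x) \] has negative power series coefficients, starting with the coefficient at $x$. (b) The function $c\mapsto{}_2F_1(a,b;c;x)$ is log-convex on $(0,\infty)$ if $a,b>0$, $0<x<1$; or $a<0$, $x<0$, $b>0$; or $b<0$, $x<0$, $a>0$. (c) The function $\mu\mapsto{}_2F_1(a,b+\mu;c+\mu;x)$ is log-convex on $[0,\infty)$ if $a>0$, $b>c>0$, $0<x<1$; or $a<0$, $b<c$, $c>0$, $0<x<1$; or $a>0$, $b<c$, $c>0$, $x<0$. (d) The function $\mu\mapsto{}_2F_1(a+\mu,b+\mu;c+\mu;x)$ is log-convex on $[0,\infty)$ if $a<c$, $b\ge c>0$, $x<0$; or $a<c$, $b<c$, $c>0$, $0<x<1$.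
   Context: $(a)_k=a(a+1)\cdots(a+k-1)$ is the Pochhammer symbol; ${}_2F_1(a,b;c;x)=\sum_{k\ge0}\frac{(a)_k(b)_k}{(c)_k k!}x^k$ (for $x<0$ understood via analytic continuation). *)

From Stdlib Require Import Reals.
From Coquelicot Require Import Coquelicot.
Open Scope R_scope.

Fixpoint poch (a : R) (k : nat) : R :=
  match k with
  | O => 1
  | S k' => poch a k' * (a + INR k')
  end.

Definition hypcoef (a b c : R) (k : nat) : R :=
  poch a k * poch b k / (poch c k * INR (Factorial.fact k)).

Definition hypseries (a b c x : R) : R :=
  Series (fun k => hypcoef a b c k * x ^ k).

(* 2F1(a,b;c;x) for x < 1: the series for |x| < 1; for x <= -1 the analytic
   continuation, given explicitly by Pfaff's transformation
   2F1(a,b;c;x) = (1-x)^(-a) 2F1(a,c-b;c;x/(x-1)), where x/(x-1) is in [1/2,1).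
   (Values for x >= 1 are irrelevant junk, 0.) *)
Definition hyp2F1 (a b c x : R) : R :=
  if Rlt_dec (Rabs x) 1 then hypseries a b c x
  else if Rlt_dec x 0 then Rpower (1 - x) (- a) * hypseries a (c - b) c (x / (x - 1))
  else 0.

Definition log_convex_on (P : R -> Prop) (f : R -> R) : Prop :=
  (forall s, P s -> 0 < f s) /\
  (forall s1 s2 t, P s1 -> P s2 -> 0 <= t <= 1 ->
     ln (f (t * s1 + (1 - t) * s2)) <= t * ln (f s1) + (1 - t) * ln (f s2)).

From Stdlib Require Import Reals Lra Lia Psatz.
From Coquelicot Require Import Coquelicot.
Open Scope R_scope.

(* (a) The n-th coefficient of the difference is a Cauchy-product sum.  Pairing
   its k-th and (n-k)-th terms reduces its sign to the facts that the ratios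
   (c)_j/(c+delta)_j < (d)_j/(d+delta)_j decrease in j and that (d)_j/(c)_j
   increases in j.
   (b)-(d) Products, sums and convergent series of log-convex functions are
   log-convex, and so are s |-> 1/(s+g) and s |-> (s+beta)/(s+g) for beta >= g;
   hence every series sum_k alpha_k (s+beta)_k/(s+g)_k y^k or
   sum_k alpha_k y^k/(s+g)_k with alpha_k, y > 0 is log-convex in s.  In each
   case, Pfaff's transformation 2F1(a,b;c;x) = (1-x)^(-a) 2F1(a,c-b;c;x/(x-1))
   or Euler's 2F1(a,b;c;x) = (1-x)^(c-a-b) 2F1(c-a,c-b;c;x) brings the function
   into this shape, up to a log-linear factor (1-x)^(alpha s + beta).  Pfaff's
   transformation is proved for small x by expanding binomially and summing
   along antidiagonals with the Chu-Vandermonde identity; Euler's follows by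
   applying Pfaff's twice near 0 and the identity theorem for power series. *)

(** * Pochhammer symbols and the Gauss coefficients *)

Lemma poch_pos a k : 0 < a -> 0 < poch a k.
Proof.
  intros Ha; induction k as [|k IH]; simpl; [lra|].
  apply Rmult_lt_0_compat; [exact IH|]. pose proof (pos_INR k); lra.
Qed.

Lemma poch_nonneg a k : 0 <= a -> 0 <= poch a k.
Proof.
  intros Ha; induction k as [|k IH]; simpl; [lra|].
  apply Rmult_le_pos; [exact IH|]. pose proof (pos_INR k); lra.
Qed.

Lemma poch_le a b k : 0 <= a <= b -> poch a k <= poch b k.
Proof.
  intros Hab; induction k as [|k IH]; simpl; [lra|].
  pose proof (pos_INR k).
  apply Rmult_le_compat; [apply poch_nonneg; lra | lra | exact IH | lra].
Qed.

Lemma Rabs_poch_le a k : Rabs (poch a k) <= poch (Rabs a) k.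
Proof.
  induction k as [|k IH]; simpl; [rewrite Rabs_R1; lra|].
  rewrite Rabs_mult. apply Rmult_le_compat; try apply Rabs_pos; [exact IH|].
  pose proof (Rabs_triang a (INR k)) as H.
  rewrite (Rabs_right (INR k)) in H by (apply Rle_ge, pos_INR). exact H.
Qed.

Lemma poch_add a k m : poch a (k + m) = poch a k * poch (a + INR k) m.
Proof.
  induction m as [|m IH]; [rewrite Nat.add_0_r; simpl; ring|].
  rewrite Nat.add_succ_r. simpl poch. rewrite IH, plus_INR. ring.
Qed.

Lemma poch_S_l a k : poch a (S k) = a * poch (a + 1) k.
Proof. change (S k) with (1 + k)%nat. rewrite poch_add. simpl. ring. Qed.

Lemma poch_1 m : poch 1 m = INR (Factorial.fact m).
Proof.
  induction m as [|m IH]; simpl poch; [reflexivity|].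
  rewrite IH, fact_simpl, mult_INR, S_INR. ring.
Qed.

Ltac pos :=
  unfold Rgt in *;
  repeat (first [ assumption | match goal with
  | |- 0 < poch _ _ => apply poch_pos
  | |- 0 < INR (Factorial.fact _) => apply INR_fact_lt_0
  | |- 0 < _ * _ => apply Rmult_lt_0_compat
  | |- 0 < / _ => apply Rinv_0_lt_compat
  | |- 0 < _ / _ => apply Rdiv_lt_0_compat
  | |- 0 < _ ^ _ => apply pow_lt
  end]); try lra.

Lemma hypcoef_0 a b c : hypcoef a b c 0 = 1.
Proof. unfold hypcoef; simpl; field. Qed.

Lemma hypcoef_S a b c n : 0 < c ->
  hypcoef a b c (S n) =
  hypcoef a b c n * ((a + INR n) * (b + INR n) / ((c + INR n) * (INR n + 1))).
Proof.
  intros Hc. unfold hypcoef. simpl poch.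
  rewrite fact_simpl, mult_INR, S_INR.
  assert (0 < poch c n) by pos. pose proof (INR_fact_lt_0 n). pose proof (pos_INR n).
  field. repeat split; lra.
Qed.

Lemma hypcoef_comm a b c n : hypcoef a b c n = hypcoef b a c n.
Proof. unfold hypcoef. rewrite (Rmult_comm (poch a n)). reflexivity. Qed.

Lemma hypcoef_pos a b c n : 0 < a -> 0 < b -> 0 < c -> 0 < hypcoef a b c n.
Proof. intros; unfold hypcoef; pos. Qed.

Lemma hypcoef_le a a' b b' c n : 0 <= a <= a' -> 0 <= b <= b' -> 0 < c ->
  hypcoef a b c n <= hypcoef a' b' c n.
Proof.
  intros Ha Hb Hc. unfold hypcoef, Rdiv.
  apply Rmult_le_compat_r; [left; pos|].
  apply Rmult_le_compat; try (apply poch_nonneg; lra); apply poch_le; lra.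
Qed.

Lemma Rabs_hypcoef_le a b c n : 0 < c ->
  Rabs (hypcoef a b c n) <= hypcoef (Rabs a) (Rabs b) c n.
Proof.
  intros Hc. unfold hypcoef, Rdiv.
  assert (0 < poch c n * INR (Factorial.fact n)) by pos.
  rewrite Rabs_mult, Rabs_mult, Rabs_inv, (Rabs_right (poch c n * _)) by lra.
  apply Rmult_le_compat_r; [left; pos|].
  apply Rmult_le_compat; try apply Rabs_pos; apply Rabs_poch_le.
Qed.

Lemma hypcoef_1_1 s m : hypcoef s 1 1 m = poch s m / INR (Factorial.fact m).
Proof. unfold hypcoef. rewrite poch_1. pose proof (INR_fact_lt_0 m). field. lra. Qed.

Lemma hypseries_comm a b c x : hypseries a b c x = hypseries b a c x.
Proof. apply Series_ext. intros; rewrite hypcoef_comm; reflexivity. Qed.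

Lemma hypseries_0 a b c : hypseries a b c 0 = 1.
Proof. change (PSeries (hypcoef a b c) 0 = 1). rewrite PSeries_0. apply hypcoef_0. Qed.

Lemma is_lim_seq_affine_ratio A C : 0 < C -> is_lim_seq (fun n => (A + INR n) / (C + INR n)) 1.
Proof.
  intros HC.
  assert (H1 : is_lim_seq (fun n => C + INR n) p_infty).
  { eapply is_lim_seq_plus; [apply is_lim_seq_const | apply is_lim_seq_INR | reflexivity]. }
  pose proof (is_lim_seq_inv _ _ H1 ltac:(discriminate)) as H2.
  pose proof (is_lim_seq_plus' _ _ 1 _ (is_lim_seq_const 1) (is_lim_seq_scal_l _ (A - C) _ H2)) as H3.
  simpl in H3. replace (1 + (A - C) * 0) with 1 in H3 by ring.
  eapply is_lim_seq_ext; [|exact H3]. intros n; pose proof (pos_INR n). simpl. field. lra.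
Qed.

Lemma ex_series_Rabs_hypcoef a b c r : 0 < c -> 0 < r < 1 ->
  ex_series (fun n => Rabs (hypcoef a b c n * r ^ n)).
Proof.
  intros Hc Hr. set (A := Rabs a + 1). set (B := Rabs b + 1).
  assert (HA : 0 < A) by (unfold A; pose proof (Rabs_pos a); lra).
  assert (HB : 0 < B) by (unfold B; pose proof (Rabs_pos b); lra).
  apply (@ex_series_le R_AbsRing R_CompleteNormedModule)
    with (b := fun n => Rabs (hypcoef A B c n * r ^ n)).
  { intros n. change norm with Rabs. rewrite Rabs_Rabsolu, !Rabs_mult.
    apply Rmult_le_compat_r; [apply Rabs_pos|].
    rewrite (Rabs_right (hypcoef A B c n)) by (left; apply hypcoef_pos; auto).
    eapply Rle_trans; [apply Rabs_hypcoef_le; exact Hc|].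
    pose proof (Rabs_pos a); pose proof (Rabs_pos b).
    apply hypcoef_le; unfold A, B; lra. }
  apply ex_series_DAlembert with (k := r); [lra| |].
  { intros n. apply Rmult_integral_contrapositive; split.
    - apply Rgt_not_eq, hypcoef_pos; auto.
    - apply pow_nonzero; lra. }
  apply is_lim_seq_ext
    with (u := fun n => (A + INR n) / (c + INR n) * ((B + INR n) / (1 + INR n)) * r).
  { intros n. rewrite hypcoef_S by exact Hc. simpl pow.
    assert (0 < hypcoef A B c n) by (apply hypcoef_pos; auto).
    pose proof (pos_INR n). assert (0 < r ^ n) by pos.
    rewrite Rabs_right; [field; repeat split; lra|]. left; pos. }
  replace (Finite r) with (Finite (1 * 1 * r)) by (f_equal; ring).
  apply is_lim_seq_mult'; [apply is_lim_seq_mult'|apply is_lim_seq_const];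
    apply is_lim_seq_affine_ratio; lra.
Qed.

Lemma is_series_Rmult_l k (f : nat -> R) l : is_series f l -> is_series (fun n => k * f n) (k * l).
Proof. exact (is_series_scal_l k f l). Qed.

Lemma Series_nonneg u : (forall k, 0 <= u k) -> ex_series u -> 0 <= Series u.
Proof.
  intros Hu He. replace 0 with (Series (fun n => 0 * u n)).
  - apply Series_le; [|exact He]. intros n; specialize (Hu n); split; lra.
  - rewrite Series_scal_l. ring.
Qed.

Lemma sum_f_R0_le_Series u n : (forall k, 0 <= u k) -> ex_series u -> sum_f_R0 u n <= Series u.
Proof.
  intros Hu He. rewrite (Series_incr_n u (S n)) by (lia || exact He). simpl Init.Nat.pred.
  assert (0 <= Series (fun k => u (S n + k)%nat)); [|lra].
  apply Series_nonneg; [auto|]. apply (ex_series_incr_n u (S n)); exact He.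
Qed.

Lemma term_le_Series u n : (forall k, 0 <= u k) -> ex_series u -> u n <= Series u.
Proof.
  intros Hu He. apply Rle_trans with (sum_f_R0 u n); [|apply sum_f_R0_le_Series; auto].
  destruct n as [|n]; simpl; [lra|]. pose proof (cond_pos_sum u n Hu). lra.
Qed.

Lemma CV_radius_ge_1 a : (forall r, 0 < r < 1 -> ex_series (fun n => Rabs (a n * r ^ n))) ->
  Rbar_le 1 (CV_radius a).
Proof.
  intros H. destruct (CV_radius_bounded a) as [Hub _].
  assert (Hr : forall r, 0 < r < 1 -> Rbar_le r (CV_radius a)).
  { intros r Hr0. apply Hub. exists (Series (fun n => Rabs (a n * r ^ n))). intros n.
    apply (term_le_Series (fun n => Rabs (a n * r ^ n))); [intros; apply Rabs_pos | auto]. }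
  pose proof (CV_radius_ge_0 a) as H0.
  destruct (CV_radius a) as [l| |]; simpl in *; auto.
  destruct (Rle_lt_dec 1 l) as [Hl|Hl]; auto. exfalso.
  specialize (Hr ((l + 1) / 2) ltac:(lra)). simpl in Hr. lra.
Qed.

Lemma CV_radius_hypcoef a b c : 0 < c -> Rbar_le 1 (CV_radius (hypcoef a b c)).
Proof. intros; apply CV_radius_ge_1; intros; apply ex_series_Rabs_hypcoef; auto. Qed.

Lemma Rbar_lt_radius a x : Rbar_le 1 (CV_radius a) -> Rabs x < 1 -> Rbar_lt (Rabs x) (CV_radius a).
Proof. intros H Hx. destruct (CV_radius a); simpl in *; auto; lra. Qed.

Lemma Rabs_lt_1_of_01 x : 0 < x < 1 -> Rabs x < 1.
Proof. intros; apply Rabs_def1; lra. Qed.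

Lemma is_series_hypseries a b c x : 0 < c -> Rabs x < 1 ->
  is_series (fun n => hypcoef a b c n * x ^ n) (hypseries a b c x).
Proof.
  intros. apply Series_correct, ex_series_Rabs, CV_disk_inside.
  apply Rbar_lt_radius; [apply CV_radius_hypcoef|]; auto.
Qed.

(** * The binomial series *)

Lemma PS_derive_hypcoef_1_1 s n : PS_derive (hypcoef s 1 1) n = (s + INR n) * hypcoef s 1 1 n.
Proof.
  unfold PS_derive. rewrite hypcoef_S by lra. rewrite S_INR. pose proof (pos_INR n). field. lra.
Qed.

Lemma binomial_ode s x : Rabs x < 1 ->
  (1 - x) * PSeries (PS_derive (hypcoef s 1 1)) x = s * PSeries (hypcoef s 1 1) x.
Proof.
  intros Hx. set (h := hypcoef s 1 1).
  assert (HR : Rbar_lt (Rabs x) (CV_radius h))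
    by (apply Rbar_lt_radius; [apply CV_radius_hypcoef; lra | exact Hx]).
  assert (ED : ex_pseries (PS_derive h) x) by (apply ex_pseries_derive; exact HR).
  rewrite Rmult_minus_distr_r, Rmult_1_l, <- PSeries_incr_1,
    <- PSeries_minus by (auto; apply ex_pseries_incr_1; exact ED).
  rewrite <- PSeries_scal. apply PSeries_ext. intros n. unfold PS_minus, PS_scal.
  change plus with Rplus; change opp with Ropp; change scal with Rmult.
  unfold h; rewrite PS_derive_hypcoef_1_1. destruct n as [|m].
  - simpl. change zero with 0. ring.
  - simpl PS_incr_1. rewrite PS_derive_hypcoef_1_1, hypcoef_S, S_INR by lra.
    pose proof (pos_INR m). field. lra.
Qed.

(* The sum times (1 - y)^s has zero derivative on (-1, 1) and equals 1 at 0. *)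
Lemma is_series_binomial s x : Rabs x < 1 ->
  is_series (fun n => hypcoef s 1 1 n * x ^ n) (Rpower (1 - x) (- s)).
Proof.
  intros Hx. set (h := hypcoef s 1 1).
  assert (HR : forall y, Rabs y < 1 -> Rbar_lt (Rabs y) (CV_radius h))
    by (intros; apply Rbar_lt_radius; [apply CV_radius_hypcoef; lra | auto]).
  set (g := fun y => PSeries h y * exp (s * ln (1 - y))).
  assert (Hg : forall y, -1 < y < 1 -> is_derive g y 0).
  { intros y Hy. assert (Hy' : Rabs y < 1) by (apply Rabs_def1; lra).
    assert (He : is_derive (fun y => exp (s * ln (1 - y))) y
                   (exp (s * ln (1 - y)) * (s * (-1 / (1 - y))))).
    { auto_derive; [lra|]. unfold Rminus. field. lra. }
    pose proof (is_derive_mult _ _ _ _ _ (is_derive_PSeries h y (HR y Hy')) He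
                  ltac:(intros; apply Rmult_comm)) as Hm.
    replace 0 with (plus (mult (PSeries (PS_derive h) y) (exp (s * ln (1 - y))))
                         (mult (PSeries h y) (exp (s * ln (1 - y)) * (s * (-1 / (1 - y)))))).
    { exact Hm. }
    change plus with Rplus; change mult with Rmult.
    pose proof (binomial_ode s y Hy') as Hode. fold h in Hode.
    apply Rmult_eq_reg_l with (1 - y); [|lra]. rewrite Rmult_0_r.
    transitivity (exp (s * ln (1 - y)) * ((1 - y) * PSeries (PS_derive h) y - s * PSeries h y)).
    - field. lra.
    - rewrite Hode. ring. }
  assert (Hgx : g x = g 0).
  { pose proof (Rabs_def2 _ _ Hx).
    destruct (Rtotal_order x 0) as [Hl|[->|Hl]]; [|reflexivity|symmetry];
      (apply eq_is_derive; [intros t Ht; apply Hg|]; lra). }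
  unfold g in Hgx. rewrite PSeries_0, Rminus_0_r, ln_1, Rmult_0_r, exp_0, Rmult_1_r in Hgx.
  unfold h in Hgx. rewrite hypcoef_0 in Hgx.
  replace (Rpower (1 - x) (- s)) with (PSeries h x).
  - apply Series_correct, ex_series_Rabs, CV_disk_inside, HR, Hx.
  - unfold Rpower. pose proof (exp_pos (s * ln (1 - x))).
    rewrite Ropp_mult_distr_l_reverse, exp_Ropp.
    apply Rmult_eq_reg_r with (exp (s * ln (1 - x))); [|lra].
    fold h in Hgx. rewrite Hgx. field. lra.
Qed.

(** * The Chu-Vandermonde identity *)

(* Binomial coefficients by Pascal's rule, so that [binom n k = 0] for [k > n]
   (Stdlib's [C n k] is not, because of truncated subtraction). *)
Fixpoint binom (n k : nat) : R :=
  match n, k with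
  | _, O => 1
  | O, S _ => 0
  | S n', S k' => binom n' k' + binom n' (S k')
  end.

Lemma binom_0_r n : binom n 0 = 1.
Proof. destruct n; reflexivity. Qed.

Lemma binom_gt n k : (n < k)%nat -> binom n k = 0.
Proof.
  revert k; induction n as [|n IH]; intros k Hk; destruct k; try lia; simpl; [reflexivity|].
  rewrite !IH by lia. ring.
Qed.

Lemma binom_C n k : (k <= n)%nat -> binom n k = Binomial.C n k.
Proof.
  revert k; induction n as [|n IH]; intros k Hk.
  - replace k with 0%nat by lia. rewrite C_n_0. reflexivity.
  - destruct k as [|k]; [rewrite C_n_0; reflexivity|]. simpl binom.
    destruct (Nat.eq_dec k n) as [->|Hne].
    + rewrite (binom_gt n (S n)), IH, !C_n_n by lia. ring.
    + rewrite !IH, pascal by lia. reflexivity.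
Qed.

Lemma sum_f_R0_mult_l (A : nat -> R) x n : sum_f_R0 (fun i => x * A i) n = x * sum_f_R0 A n.
Proof. rewrite scal_sum. apply sum_eq. intros; ring. Qed.

Definition chu_vandermonde_sum (n : nat) (g c : R) : R :=
  sum_f_R0 (fun k => binom n k * (-1) ^ k * poch g k / poch c k) n.

Lemma chu_vandermonde_sum_S n g c : 0 < c ->
  chu_vandermonde_sum (S n) g c =
  chu_vandermonde_sum n g c - g / c * chu_vandermonde_sum n (g + 1) (c + 1).
Proof.
  intros Hc. unfold chu_vandermonde_sum.
  rewrite decomp_sum by lia. simpl Init.Nat.pred.
  assert (E : forall i,
    binom (S n) (S i) * (-1) ^ S i * poch g (S i) / poch c (S i) =
    binom n (S i) * (-1) ^ S i * poch g (S i) / poch c (S i)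
    - g / c * (binom n i * (-1) ^ i * poch (g + 1) i / poch (c + 1) i)).
  { intros i. simpl binom. rewrite !poch_S_l. assert (0 < poch (c + 1) i) by pos.
    simpl pow. field. lra. }
  rewrite (sum_eq _ _ n (fun i _ => E i)), minus_sum, sum_f_R0_mult_l.
  set (F := fun k => binom n k * (-1) ^ k * poch g k / poch c k).
  assert (Hsplit : sum_f_R0 F n = F 0%nat + sum_f_R0 (fun i => F (S i)) n).
  { transitivity (sum_f_R0 F (S n)).
    - rewrite tech5. unfold F at 3. rewrite binom_gt by lia. unfold Rdiv. ring.
    - rewrite decomp_sum by lia. reflexivity. }
  rewrite Hsplit. unfold F. rewrite !binom_0_r. ring.
Qed.

Lemma chu_vandermonde n g c : 0 < c -> chu_vandermonde_sum n g c = poch (c - g) n / poch c n.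
Proof.
  revert g c; induction n as [|n IH]; intros g c Hc.
  - unfold chu_vandermonde_sum. simpl. field.
  - rewrite chu_vandermonde_sum_S, !IH by lra.
    replace (c + 1 - (g + 1)) with (c - g) by ring.
    rewrite (poch_S_l c n). simpl poch.
    assert (0 < poch (c + 1) n) by pos. pose proof (pos_INR n).
    assert (Hn : poch c n * (c + INR n) = c * poch (c + 1) n) by (rewrite <- poch_S_l; reflexivity).
    assert (0 < poch c n) by pos.
    replace (poch (c + 1) n) with (poch c n * (c + INR n) / c) by (rewrite Hn; field; lra).
    field. repeat split; lra.
Qed.

(** * Summing an absolutely convergent double series along antidiagonals *)

Lemma sum_f_R0_antidiagonal (f : nat -> nat -> R) N :
  sum_f_R0 (fun n => sum_f_R0 (fun k => f k (n - k)%nat) n) N =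
  sum_f_R0 (fun k => sum_f_R0 (f k) (N - k)) N.
Proof.
  induction N as [|N IH]; [reflexivity|].
  rewrite tech5, IH, (tech5 (fun k => sum_f_R0 (f k) (S N - k)) N), Nat.sub_diag.
  assert (E : sum_f_R0 (fun k => sum_f_R0 (f k) (S N - k)) N =
              sum_f_R0 (fun k => sum_f_R0 (f k) (N - k) + f k (S N - k)%nat) N).
  { apply sum_eq. intros k Hk. replace (S N - k)%nat with (S (N - k)) by lia. apply tech5. }
  rewrite E, plus_sum, tech5, Nat.sub_diag. simpl. ring.
Qed.

Lemma Rabs_Series_minus_sum_le a m : ex_series (fun j => Rabs (a j)) ->
  Rabs (Series a - sum_f_R0 a m) <= Series (fun j => Rabs (a j)).
Proof.
  intros Habs. pose proof (ex_series_Rabs _ Habs) as Ha.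
  rewrite (Series_incr_n a (S m)), (Series_incr_n (fun j => Rabs (a j)) (S m)) by (lia || auto).
  simpl Init.Nat.pred.
  replace (sum_f_R0 a m + Series (fun k => a (S m + k)%nat) - sum_f_R0 a m)
    with (Series (fun k => a (S m + k)%nat)) by ring.
  pose proof (cond_pos_sum (fun j => Rabs (a j)) m (fun _ => Rabs_pos _)).
  assert (Rabs (Series (fun k => a (S m + k)%nat)) <= Series (fun k => Rabs (a (S m + k)%nat)));
    [|lra].
  apply Series_Rabs. apply (ex_series_incr_n (fun j => Rabs (a j)) (S m)). exact Habs.
Qed.

(* Tannery's theorem: dominated convergence for series. *)
Lemma tannery (w : nat -> nat -> R) (M : nat -> R) :
  (forall N k, Rabs (w N k) <= M k) -> ex_series M ->
  (forall k, is_lim_seq (fun N => w N k) 0) ->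
  is_lim_seq (fun N => sum_f_R0 (w N) N) 0.
Proof.
  intros Hbound HM Hlim.
  assert (M0 : forall k, 0 <= M k)
    by (intros k; pose proof (Hbound 0%nat k); pose proof (Rabs_pos (w 0%nat k)); lra).
  assert (Hfin : forall K, is_lim_seq (fun N => sum_f_R0 (w N) K) 0).
  { induction K as [|K IH]; [exact (Hlim 0%nat)|]. simpl.
    replace (Finite 0) with (Finite (0 + 0)) by (f_equal; ring).
    apply is_lim_seq_plus'; [exact IH | apply Hlim]. }
  apply is_lim_seq_Reals. intros eps Heps.
  destruct (proj1 (is_series_Reals M (Series M)) (Series_correct _ HM) (eps / 2))
    as [K HK]; [lra|].
  destruct (proj1 (is_lim_seq_Reals _ 0) (Hfin K) (eps / 2)) as [N1 HN1]; [lra|].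
  exists (Nat.max N1 (S K)). intros N HN. unfold Rdist. rewrite Rminus_0_r.
  specialize (HN1 N ltac:(lia)). specialize (HK K (le_n K)).
  unfold Rdist in HN1, HK. rewrite Rminus_0_r in HN1. rewrite Rabs_minus_sym in HK.
  assert (Htail : Rabs (sum_f_R0 (fun i => w N (S K + i)%nat) (N - S K))
                  <= Series M - sum_f_R0 M K).
  { eapply Rle_trans; [apply sum_f_R0_triangle|].
    apply Rle_trans with (sum_f_R0 M N - sum_f_R0 M K).
    - rewrite (tech2 M K N) by lia.
      assert (sum_f_R0 (fun i => Rabs (w N (S K + i)%nat)) (N - S K)
              <= sum_f_R0 (fun i => M (S K + i)%nat) (N - S K)); [|lra].
      apply sum_Rle. intros; apply Hbound.
    - pose proof (sum_f_R0_le_Series M N M0 HM). lra. }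
  rewrite (tech2 (w N) K N) by lia.
  pose proof (Rabs_triang (sum_f_R0 (w N) K) (sum_f_R0 (fun i => w N (S K + i)%nat) (N - S K))).
  pose proof (Rle_abs (Series M - sum_f_R0 M K)). lra.
Qed.

Lemma is_series_antidiagonal (u : nat -> nat -> R) (U M : nat -> R) :
  (forall k, is_series (u k) (U k)) ->
  (forall k, is_series (fun j => Rabs (u k j)) (M k)) ->
  ex_series M ->
  is_series (fun n => sum_f_R0 (fun k => u k (n - k)%nat) n) (Series U).
Proof.
  intros HU HM EM.
  assert (EU : ex_series U).
  { apply (@ex_series_le R_AbsRing R_CompleteNormedModule) with (b := M); [|exact EM].
    intros k. change norm with Rabs.
    rewrite <- (is_series_unique _ _ (HU k)), <- (is_series_unique _ _ (HM k)).
    apply Series_Rabs. eexists; apply HM. }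
  set (w := fun N k => U k - sum_f_R0 (u k) (N - k)).
  apply is_series_Reals. apply is_lim_seq_Reals.
  apply is_lim_seq_ext with (u := fun N => sum_f_R0 U N - sum_f_R0 (w N) N).
  { intros N. rewrite sum_f_R0_antidiagonal, <- minus_sum.
    apply sum_eq. intros k _. unfold w. ring. }
  replace (Finite (Series U)) with (Finite (Series U - 0)) by (f_equal; ring).
  apply is_lim_seq_minus'.
  - apply is_lim_seq_Reals, is_series_Reals, Series_correct, EU.
  - apply tannery with (M := M); [|exact EM|].
    + intros N k. unfold w.
      rewrite <- (is_series_unique _ _ (HU k)), <- (is_series_unique _ _ (HM k)).
      apply Rabs_Series_minus_sum_le. eexists; apply HM.
    + intros k. apply (is_lim_seq_incr_n _ k).
      apply is_lim_seq_ext with (u := fun n => U k - sum_f_R0 (u k) n).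
      { intros n. unfold w. do 2 f_equal. lia. }
      replace (Finite 0) with (Finite (U k - U k)) by (f_equal; ring).
      apply is_lim_seq_minus'; [apply is_lim_seq_const|].
      apply is_lim_seq_Reals, is_series_Reals, HU.
Qed.

(** * Pfaff's and Euler's transformations *)

Section PfaffSmall.

Variables (a b c z : R).
Hypothesis Hc : 0 < c.
Hypothesis Hz : 0 < z < 1/2.

(* Expanding (1 - z)^(-a) (z/(z-1))^k = (-z)^k (1 - z)^(-a-k) binomially gives a
   double series whose antidiagonal sums are Chu-Vandermonde sums; [z < 1/2]
   makes z/(1-z) < 1, which gives absolute convergence. *)
Let A k := hypcoef a (c - b) c k.
Let u k j := A k * (-1) ^ k * z ^ k * (hypcoef (a + INR k) 1 1 j * z ^ j).
Let U k := A k * (z / (z - 1)) ^ k * Rpower (1 - z) (- a).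
Let M k := Series (fun j => Rabs (u k j)).

Let Hz1 : Rabs z < 1.
Proof. apply Rabs_lt_1_of_01; lra. Qed.

Lemma pfaff_row k : is_series (u k) (U k).
Proof.
  unfold u, U.
  replace (A k * (z / (z - 1)) ^ k * Rpower (1 - z) (- a))
    with (A k * (-1) ^ k * z ^ k * Rpower (1 - z) (- (a + INR k))).
  - apply is_series_Rmult_l, is_series_binomial, Hz1.
  - rewrite Ropp_plus_distr, Rpower_plus, (Rpower_Ropp _ (INR k)), Rpower_pow by lra.
    unfold Rdiv. rewrite Rpow_mult_distr, pow_inv.
    replace (z - 1) with ((-1) * (1 - z)) by ring. rewrite Rpow_mult_distr, Rinv_mult.
    replace (/ (-1) ^ k) with ((-1) ^ k) by (rewrite <- pow_inv; f_equal; field).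
    ring.
Qed.

Lemma Rabs_pfaff_term_le k j :
  Rabs (u k j) <= Rabs (A k) * z ^ k * (hypcoef (Rabs a + INR k) 1 1 j * z ^ j).
Proof.
  unfold u. assert (0 < z ^ k) by pos. assert (0 < z ^ j) by pos.
  rewrite !Rabs_mult, pow_1_abs, (Rabs_right (z ^ k)), (Rabs_right (z ^ j)), Rmult_1_r by lra.
  apply Rmult_le_compat_l; [apply Rmult_le_pos; [apply Rabs_pos | lra]|].
  apply Rmult_le_compat_r; [lra|].
  eapply Rle_trans; [apply Rabs_hypcoef_le; lra|]. rewrite Rabs_R1.
  pose proof (Rabs_triang a (INR k)) as Htri.
  rewrite (Rabs_right (INR k)) in Htri by (apply Rle_ge, pos_INR).
  apply hypcoef_le; [split; [apply Rabs_pos | exact Htri] | lra | lra].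
Qed.

Let is_series_row_bound k :
  is_series (fun j => Rabs (A k) * z ^ k * (hypcoef (Rabs a + INR k) 1 1 j * z ^ j))
    (Rabs (A k) * z ^ k * Rpower (1 - z) (- (Rabs a + INR k))).
Proof. apply is_series_Rmult_l, is_series_binomial, Hz1. Qed.

Lemma ex_series_pfaff_row_abs k : ex_series (fun j => Rabs (u k j)).
Proof.
  apply (@ex_series_le R_AbsRing R_CompleteNormedModule)
    with (b := fun j => Rabs (A k) * z ^ k * (hypcoef (Rabs a + INR k) 1 1 j * z ^ j)).
  - intros j. change norm with Rabs. rewrite Rabs_Rabsolu. apply Rabs_pfaff_term_le.
  - eexists. apply is_series_row_bound.
Qed.

Lemma pfaff_row_abs_le k :
  M k <= Rpower (1 - z) (- Rabs a) * Rabs (A k * (z / (1 - z)) ^ k).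
Proof.
  eapply Rle_trans.
  - apply Series_le
      with (b := fun j => Rabs (A k) * z ^ k * (hypcoef (Rabs a + INR k) 1 1 j * z ^ j)).
    + intros j; split; [apply Rabs_pos | apply Rabs_pfaff_term_le].
    + eexists. apply is_series_row_bound.
  - rewrite (is_series_unique _ _ (is_series_row_bound k)).
    rewrite Ropp_plus_distr, Rpower_plus, (Rpower_Ropp (1 - z) (INR k)), Rpower_pow by lra.
    rewrite Rabs_mult, <- RPow_abs, (Rabs_right (z / (1 - z))) by (left; pos).
    unfold Rdiv. rewrite Rpow_mult_distr, pow_inv. right; ring.
Qed.

Lemma ex_series_pfaff_row_abs_sums : ex_series M.
Proof.
  apply (@ex_series_le R_AbsRing R_CompleteNormedModule)
    with (b := fun k => Rpower (1 - z) (- Rabs a) * Rabs (A k * (z / (1 - z)) ^ k)).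
  - intros k. change norm with Rabs.
    rewrite Rabs_right; [apply pfaff_row_abs_le|].
    apply Rle_ge, Series_nonneg; [intros; apply Rabs_pos | apply ex_series_pfaff_row_abs].
  - destruct (ex_series_Rabs_hypcoef a (c - b) c (z / (1 - z)) Hc) as [l Hl].
    + split; [pos|]. apply Rmult_lt_reg_r with (1 - z); [lra|].
      unfold Rdiv. rewrite Rmult_assoc, Rinv_l by lra. lra.
    + eexists. apply is_series_Rmult_l. exact Hl.
Qed.

Lemma pfaff_antidiagonal n :
  sum_f_R0 (fun k => u k (n - k)%nat) n = hypcoef a b c n * z ^ n.
Proof.
  assert (E : forall k, (k <= n)%nat -> u k (n - k)%nat =
     z ^ n * (poch a n / INR (Factorial.fact n))
     * (binom n k * (-1) ^ k * poch (c - b) k / poch c k)).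
  { intros k Hk. unfold u, A. rewrite hypcoef_1_1. unfold hypcoef.
    replace (poch a n) with (poch a k * poch (a + INR k) (n - k))
      by (rewrite <- poch_add; f_equal; lia).
    replace (z ^ n) with (z ^ k * z ^ (n - k)) by (rewrite <- pow_add; f_equal; lia).
    rewrite binom_C by exact Hk. unfold Binomial.C.
    pose proof (INR_fact_lt_0 n). pose proof (INR_fact_lt_0 k).
    pose proof (INR_fact_lt_0 (n - k)). assert (0 < poch c k) by pos.
    field. repeat split; lra. }
  rewrite (sum_eq _ _ n E), sum_f_R0_mult_l.
  fold (chu_vandermonde_sum n (c - b) c). rewrite chu_vandermonde by exact Hc.
  replace (c - (c - b)) with b by ring. unfold hypcoef.
  pose proof (INR_fact_lt_0 n). assert (0 < poch c n) by pos. field. lra.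
Qed.

Lemma pfaff_small :
  is_series (fun n => hypcoef a b c n * z ^ n)
    (Rpower (1 - z) (- a) * hypseries a (c - b) c (z / (z - 1))).
Proof.
  eapply is_series_ext; [apply pfaff_antidiagonal|].
  replace (Rpower (1 - z) (- a) * hypseries a (c - b) c (z / (z - 1))) with (Series U).
  - apply is_series_antidiagonal with (M := M).
    + apply pfaff_row.
    + intros k. apply Series_correct, ex_series_pfaff_row_abs.
    + apply ex_series_pfaff_row_abs_sums.
  - unfold U, A, hypseries. rewrite Series_scal_r. ring.
Qed.

End PfaffSmall.

Lemma Rpower_Rinv_base y e : 0 < y -> Rpower (/ y) e = Rpower y (- e).
Proof. intros. unfold Rpower. rewrite ln_Rinv by auto. f_equal; ring. Qed.

Lemma pfaff_arg_range x : x < 0 -> 0 < x / (x - 1) < 1.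
Proof.
  intros Hx. split; [apply Rdiv_neg_neg; lra|].
  apply Rmult_lt_reg_r with (1 - x); [lra|].
  replace (x / (x - 1) * (1 - x)) with (- x) by (field; lra). lra.
Qed.

Lemma pfaff a b c x : 0 < c -> -1 < x < 1/2 ->
  hypseries a b c x = Rpower (1 - x) (- a) * hypseries a (c - b) c (x / (x - 1)).
Proof.
  intros Hc Hx.
  destruct (Rtotal_order x 0) as [Hn|[->|Hp]].
  - set (z := x / (x - 1)).
    assert (Hz : 0 < z < 1/2).
    { unfold z. split; [apply Rdiv_neg_neg; lra|].
      apply Rmult_lt_reg_r with (1 - x); [lra|].
      replace (x / (x - 1) * (1 - x)) with (- x) by (field; lra). lra. }
    pose proof (pfaff_small a (c - b) c z Hc Hz) as H.
    replace (z / (z - 1)) with x in H by (unfold z; field; split; lra).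
    replace (1 - z) with (/ (1 - x)) in H by (unfold z; field; split; lra).
    replace (c - (c - b)) with b in H by ring.
    rewrite Rpower_Rinv_base, Ropp_involutive in H by lra.
    apply is_series_unique in H. unfold hypseries at 2. rewrite H.
    rewrite <- Rmult_assoc, <- Rpower_plus, Rplus_opp_l, Rpower_O by lra. ring.
  - replace (0 / (0 - 1)) with 0 by field. rewrite !hypseries_0, Rminus_0_r.
    unfold Rpower. rewrite ln_1, Rmult_0_r, exp_0. ring.
  - apply is_series_unique, pfaff_small; [exact Hc | lra].
Qed.

Lemma euler_near_0 a b c x : 0 < c -> -1 < x < 1/2 ->
  hypseries a b c x = Rpower (1 - x) (c - a - b) * hypseries (c - a) (c - b) c x.
Proof.
  intros Hc Hx. rewrite pfaff by auto. set (w := x / (x - 1)).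
  assert (Hw : -1 < w < 1/2).
  { unfold w. split; apply Rmult_lt_reg_r with (1 - x); try lra;
      replace (x / (x - 1) * (1 - x)) with (- x) by (field; lra); lra. }
  rewrite hypseries_comm, pfaff by auto.
  replace (w / (w - 1)) with x by (unfold w; field; split; lra).
  replace (1 - w) with (/ (1 - x)) by (unfold w; field; split; lra).
  rewrite Rpower_Rinv_base, Ropp_involutive, hypseries_comm, <- Rmult_assoc, <- Rpower_plus
    by lra.
  f_equal. f_equal. ring.
Qed.

Lemma ex_series_Rabs_PS_mult (p q : nat -> R) r :
  ex_series (fun n => Rabs (p n * r ^ n)) -> ex_series (fun n => Rabs (q n * r ^ n)) ->
  ex_series (fun n => Rabs (PS_mult p q n * r ^ n)).
Proof.
  intros [lp Hp] [lq Hq].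
  pose proof (is_series_mult_pos _ _ _ _ Hp Hq (fun n => Rabs_pos _) (fun n => Rabs_pos _)) as H.
  apply (@ex_series_le R_AbsRing R_CompleteNormedModule) with
    (b := fun n => sum_f_R0 (fun k => Rabs (p k * r ^ k) * Rabs (q (n - k)%nat * r ^ (n - k))) n);
    [|eexists; exact H].
  intros n. change norm with Rabs. rewrite Rabs_Rabsolu. unfold PS_mult.
  rewrite Rmult_comm, scal_sum. eapply Rle_trans; [apply sum_f_R0_triangle|].
  apply sum_Rle. intros k Hk. rewrite <- !Rabs_mult. right. f_equal.
  replace (r ^ n) with (r ^ k * r ^ (n - k)) by (rewrite <- pow_add; f_equal; lia). ring.
Qed.

(* Both sides are power series on the unit disc agreeing near 0. *)
Lemma euler a b c x : 0 < c -> Rabs x < 1 ->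
  hypseries a b c x = Rpower (1 - x) (c - a - b) * hypseries (c - a) (c - b) c x.
Proof.
  intros Hc Hx.
  set (p := hypcoef (a + b - c) 1 1). set (q := hypcoef (c - a) (c - b) c).
  assert (Hp1 : Rbar_le 1 (CV_radius p)) by (apply CV_radius_hypcoef; lra).
  assert (Hq1 : Rbar_le 1 (CV_radius q)) by (apply CV_radius_hypcoef; lra).
  assert (Hpq1 : Rbar_le 1 (CV_radius (PS_mult p q))).
  { apply CV_radius_ge_1. intros r Hr.
    apply ex_series_Rabs_PS_mult; apply ex_series_Rabs_hypcoef; auto; lra. }
  assert (Hprod : forall y, Rabs y < 1 ->
    Rpower (1 - y) (c - a - b) * hypseries (c - a) (c - b) c y = PSeries (PS_mult p q) y).
  { intros y Hy. rewrite PSeries_mult by (apply Rbar_lt_radius; auto). f_equal.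
    replace (c - a - b) with (- (a + b - c)) by ring.
    symmetry. apply is_series_unique, is_series_binomial, Hy. }
  assert (Hcoef : forall n, hypcoef a b c n = PS_mult p q n).
  { intros n. apply PSeries_ext_recip.
    - eapply Rbar_lt_le_trans; [|apply CV_radius_hypcoef; lra]. simpl; lra.
    - eapply Rbar_lt_le_trans; [|exact Hpq1]. simpl; lra.
    - assert (Hh : 0 < 1/2) by lra. exists (mkposreal _ Hh). intros y Hy.
      change (Rabs (y - 0) < 1/2) in Hy. rewrite Rminus_0_r in Hy.
      pose proof (Rabs_def2 _ _ Hy).
      change (hypseries a b c y = PSeries (PS_mult p q) y).
      rewrite <- Hprod by lra. apply euler_near_0; auto; lra. }
  rewrite Hprod by exact Hx. apply PSeries_ext. exact Hcoef.
Qed.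

(** * Log-convex functions *)

Definition convex_set (P : R -> Prop) : Prop :=
  forall s1 s2 t, P s1 -> P s2 -> 0 <= t <= 1 -> P (t * s1 + (1 - t) * s2).

Lemma exp_convex u v t : 0 <= t <= 1 ->
  exp (t * u + (1 - t) * v) <= t * exp u + (1 - t) * exp v.
Proof.
  intros Ht. set (w := t * u + (1 - t) * v).
  assert (Hw : forall y, exp w * (1 + (y - w)) <= exp y).
  { intros y. replace (exp y) with (exp w * exp (y - w)) by (rewrite <- exp_plus; f_equal; ring).
    apply Rmult_le_compat_l; [left; apply exp_pos | apply exp_ineq1_le]. }
  pose proof (Hw u). pose proof (Hw v).
  assert (t * (exp w * (1 + (u - w))) + (1 - t) * (exp w * (1 + (v - w))) = exp w)
    by (unfold w; ring).
  nra.
Qed.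

Lemma ln_concave y1 y2 t : 0 < y1 -> 0 < y2 -> 0 <= t <= 1 ->
  t * ln y1 + (1 - t) * ln y2 <= ln (t * y1 + (1 - t) * y2).
Proof.
  intros H1 H2 Ht. rewrite <- (ln_exp (t * ln y1 + (1 - t) * ln y2)).
  apply ln_le; [apply exp_pos|].
  pose proof (exp_convex (ln y1) (ln y2) t Ht) as H. rewrite !exp_ln in H by auto. exact H.
Qed.

Lemma weighted_geometric_mean_le A B u v t : 0 < A -> 0 < B -> 0 < u -> 0 < v -> 0 <= t <= 1 ->
  exp (t * ln u + (1 - t) * ln v)
  <= exp (t * ln A + (1 - t) * ln B) * (t * (u / A) + (1 - t) * (v / B)).
Proof.
  intros HA HB Hu Hv Ht.
  replace (t * ln u + (1 - t) * ln v)
    with (t * ln A + (1 - t) * ln B + (t * ln (u / A) + (1 - t) * ln (v / B))).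
  2:{ unfold Rdiv. rewrite !ln_mult, !ln_Rinv by (auto; apply Rinv_0_lt_compat; auto). ring. }
  rewrite exp_plus. apply Rmult_le_compat_l; [left; apply exp_pos|].
  pose proof (exp_convex (ln (u / A)) (ln (v / B)) t Ht) as H.
  rewrite !exp_ln in H by pos. exact H.
Qed.

Section LogConvex.

Variable P : R -> Prop.
Hypothesis HP : convex_set P.

Lemma log_convex_on_ext f g : (forall s, P s -> f s = g s) -> log_convex_on P f -> log_convex_on P g.
Proof.
  intros E [H1 H2]. split.
  - intros s Hs; rewrite <- E; auto.
  - intros s1 s2 t Hs1 Hs2 Ht. rewrite <- !E; auto.
Qed.

Lemma log_convex_on_const K : 0 < K -> log_convex_on P (fun _ => K).
Proof. intros HK. split; [auto|]. intros. lra. Qed.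

Lemma log_convex_on_mult f g :
  log_convex_on P f -> log_convex_on P g -> log_convex_on P (fun s => f s * g s).
Proof.
  intros [F1 F2] [G1 G2]. split; [intros s Hs; apply Rmult_lt_0_compat; auto|].
  intros s1 s2 t Hs1 Hs2 Ht. pose proof (HP s1 s2 t Hs1 Hs2 Ht).
  pose proof (F2 s1 s2 t Hs1 Hs2 Ht). pose proof (G2 s1 s2 t Hs1 Hs2 Ht).
  rewrite !ln_mult by auto. lra.
Qed.

Lemma log_convex_on_Rpower_affine q al be : 0 < q ->
  log_convex_on P (fun s => Rpower q (al * s + be)).
Proof. intros Hq. split; [intros; apply exp_pos|]. intros. rewrite !ln_Rpower. right; ring. Qed.

Lemma log_convex_on_inv_affine g : (forall s, P s -> 0 < s + g) ->
  log_convex_on P (fun s => / (s + g)).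
Proof.
  intros Hg. split; [intros s Hs; apply Rinv_0_lt_compat; auto|].
  intros s1 s2 t Hs1 Hs2 Ht. pose proof (Hg _ (HP s1 s2 t Hs1 Hs2 Ht)).
  rewrite !ln_Rinv by auto.
  pose proof (ln_concave (s1 + g) (s2 + g) t (Hg _ Hs1) (Hg _ Hs2) Ht) as Hln.
  replace (t * (s1 + g) + (1 - t) * (s2 + g)) with (t * s1 + (1 - t) * s2 + g) in Hln by ring.
  lra.
Qed.

Lemma log_convex_on_le_weighted f s1 s2 t A B : log_convex_on P f ->
  P s1 -> P s2 -> 0 <= t <= 1 -> 0 < A -> 0 < B ->
  f (t * s1 + (1 - t) * s2)
  <= exp (t * ln A + (1 - t) * ln B) * (t * (f s1 / A) + (1 - t) * (f s2 / B)).
Proof.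
  intros [F1 F2] Hs1 Hs2 Ht HA HB.
  eapply Rle_trans; [|apply weighted_geometric_mean_le; auto].
  rewrite <- (exp_ln (f _)) by (apply F1, HP; auto).
  destruct (F2 s1 s2 t Hs1 Hs2 Ht) as [Hlt|Heq]; [left; apply exp_increasing, Hlt|].
  rewrite Heq. lra.
Qed.

Lemma ln_le_of_le_exp y e : 0 < y -> y <= exp e -> ln y <= e.
Proof. intros Hy H. rewrite <- (ln_exp e). apply ln_le; auto. Qed.

Lemma log_convex_on_plus f g :
  log_convex_on P f -> log_convex_on P g -> log_convex_on P (fun s => f s + g s).
Proof.
  intros Hf Hg. pose proof (proj1 Hf) as F1. pose proof (proj1 Hg) as G1.
  assert (Hpos : forall s, P s -> 0 < f s + g s)
    by (intros s Hs; pose proof (F1 s Hs); pose proof (G1 s Hs); lra).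
  split; [exact Hpos|]. intros s1 s2 t Hs1 Hs2 Ht.
  pose proof (Hpos _ Hs1) as HA. pose proof (Hpos _ Hs2) as HB.
  apply ln_le_of_le_exp; [apply Hpos, HP; auto|].
  pose proof (log_convex_on_le_weighted f s1 s2 t _ _ Hf Hs1 Hs2 Ht HA HB).
  pose proof (log_convex_on_le_weighted g s1 s2 t _ _ Hg Hs1 Hs2 Ht HA HB).
  set (E := exp (t * ln (f s1 + g s1) + (1 - t) * ln (f s2 + g s2))) in *.
  assert (E = E * (t * (f s1 / (f s1 + g s1)) + (1 - t) * (f s2 / (f s2 + g s2)))
            + E * (t * (g s1 / (f s1 + g s1)) + (1 - t) * (g s2 / (f s2 + g s2))))
    by (field; lra).
  lra.
Qed.

Lemma log_convex_on_series (f : nat -> R -> R) F :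
  (forall k, log_convex_on P (f k)) -> (forall s, P s -> is_series (fun k => f k s) (F s)) ->
  log_convex_on P F.
Proof.
  intros Hf HF.
  assert (Fpos : forall s, P s -> 0 < F s).
  { intros s Hs. rewrite <- (is_series_unique _ _ (HF s Hs)).
    apply Rlt_le_trans with (f 0%nat s); [apply (proj1 (Hf 0%nat)), Hs|].
    apply (term_le_Series (fun k => f k s) 0); [|eexists; apply HF, Hs].
    intros k; left; apply (proj1 (Hf k)), Hs. }
  split; [exact Fpos|]. intros s1 s2 t Hs1 Hs2 Ht.
  pose proof (Fpos _ Hs1) as HA. pose proof (Fpos _ Hs2) as HB.
  apply ln_le_of_le_exp; [apply Fpos, HP; auto|].
  set (G := exp (t * ln (F s1) + (1 - t) * ln (F s2))).
  assert (Hb : is_series (fun k => G * (t * (f k s1 / F s1) + (1 - t) * (f k s2 / F s2))) G).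
  { pose proof (is_series_Rmult_l G _ _
      (is_series_plus _ _ _ _ (is_series_Rmult_l (t / F s1) _ _ (HF s1 Hs1))
                              (is_series_Rmult_l ((1 - t) / F s2) _ _ (HF s2 Hs2)))) as H.
    change plus with Rplus in H.
    replace (G * (t / F s1 * F s1 + (1 - t) / F s2 * F s2)) with G in H by (field; lra).
    eapply is_series_ext; [|exact H]. intros n; simpl. unfold Rdiv; ring. }
  rewrite <- (is_series_unique _ _ (HF _ (HP s1 s2 t Hs1 Hs2 Ht))), <- (is_series_unique _ _ Hb).
  apply Series_le; [|eexists; exact Hb].
  intros k. split; [left; apply (proj1 (Hf k)), HP; auto|].
  apply log_convex_on_le_weighted; auto.
Qed.

Lemma log_convex_on_affine_ratio be g : g <= be -> (forall s, P s -> 0 < s + g) ->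
  log_convex_on P (fun s => (s + be) / (s + g)).
Proof.
  intros Hbg Hg.
  apply log_convex_on_ext with (f := fun s => 1 + (be - g) * / (s + g)).
  { intros s Hs. pose proof (Hg s Hs). field. lra. }
  destruct (Req_dec be g) as [->|Hne].
  - apply log_convex_on_ext with (f := fun _ => 1); [intros; ring|].
    apply log_convex_on_const; lra.
  - apply log_convex_on_plus; [apply log_convex_on_const; lra|].
    apply log_convex_on_mult; [apply log_convex_on_const; lra|].
    apply log_convex_on_inv_affine, Hg.
Qed.

Lemma log_convex_on_inv_poch g k : (forall s, P s -> 0 < s + g) ->
  log_convex_on P (fun s => / poch (s + g) k).
Proof.
  intros Hg. induction k as [|k IH].
  - apply log_convex_on_ext with (f := fun _ => 1); [intros; simpl; field|].
    apply log_convex_on_const; lra.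
  - apply log_convex_on_ext with (f := fun s => / poch (s + g) k * / (s + (g + INR k))).
    { intros s Hs. simpl poch. pose proof (Hg s Hs). assert (0 < poch (s + g) k) by pos.
      pose proof (pos_INR k). field. split; lra. }
    apply log_convex_on_mult; [exact IH|]. apply log_convex_on_inv_affine.
    intros s Hs; pose proof (Hg s Hs); pose proof (pos_INR k); lra.
Qed.

Lemma log_convex_on_poch_ratio be g k : g <= be -> (forall s, P s -> 0 < s + g) ->
  log_convex_on P (fun s => poch (s + be) k / poch (s + g) k).
Proof.
  intros Hbg Hg. induction k as [|k IH].
  - apply log_convex_on_ext with (f := fun _ => 1); [intros; simpl; field|].
    apply log_convex_on_const; lra.
  - apply log_convex_on_ext with
      (f := fun s => poch (s + be) k / poch (s + g) k * ((s + (be + INR k)) / (s + (g + INR k)))).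
    { intros s Hs. simpl poch. pose proof (Hg s Hs). assert (0 < poch (s + g) k) by pos.
      pose proof (pos_INR k). field. split; lra. }
    apply log_convex_on_mult; [exact IH|]. apply log_convex_on_affine_ratio; [lra|].
    intros s Hs; pose proof (Hg s Hs); pose proof (pos_INR k); lra.
Qed.

Lemma log_convex_on_hypseries_shift_bc a be g y : 0 < a -> 0 < y < 1 -> g <= be ->
  (forall s, P s -> 0 < s + g) ->
  log_convex_on P (fun s => hypseries a (s + be) (s + g) y).
Proof.
  intros Ha Hy Hbg Hg.
  apply log_convex_on_series with (f := fun k s =>
    poch a k * y ^ k / INR (Factorial.fact k) * (poch (s + be) k / poch (s + g) k)).
  - intros k. apply log_convex_on_mult; [apply log_convex_on_const; pos|].
    apply log_convex_on_poch_ratio; auto.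
  - intros s Hs. eapply is_series_ext; [|apply is_series_hypseries; [apply Hg, Hs | apply Rabs_lt_1_of_01, Hy]].
    intros n. apply (@eq_sym R). unfold hypcoef. pose proof (Hg s Hs). assert (0 < poch (s + g) n) by pos.
    pose proof (INR_fact_lt_0 n). field; repeat split; lra.
Qed.

Lemma log_convex_on_hypseries_shift_c a b g y : 0 < a -> 0 < b -> 0 < y < 1 ->
  (forall s, P s -> 0 < s + g) ->
  log_convex_on P (fun s => hypseries a b (s + g) y).
Proof.
  intros Ha Hb Hy Hg.
  apply log_convex_on_series with (f := fun k s =>
    poch a k * poch b k * y ^ k / INR (Factorial.fact k) * / poch (s + g) k).
  - intros k. apply log_convex_on_mult; [apply log_convex_on_const; pos|].
    apply log_convex_on_inv_poch, Hg.
  - intros s Hs. eapply is_series_ext; [|apply is_series_hypseries; [apply Hg, Hs | apply Rabs_lt_1_of_01, Hy]].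
    intros n. apply (@eq_sym R). unfold hypcoef. pose proof (Hg s Hs). assert (0 < poch (s + g) n) by pos.
    pose proof (INR_fact_lt_0 n). field; repeat split; lra.
Qed.

End LogConvex.

Lemma hyp2F1_unit_disc a b c x : Rabs x < 1 -> hyp2F1 a b c x = hypseries a b c x.
Proof. intros H. unfold hyp2F1. destruct (Rlt_dec (Rabs x) 1); [reflexivity | contradiction]. Qed.

Lemma hyp2F1_euler a b c x : 0 < c -> 0 < x < 1 ->
  hyp2F1 a b c x = Rpower (1 - x) (c - a - b) * hypseries (c - a) (c - b) c x.
Proof.
  intros Hc Hx. rewrite hyp2F1_unit_disc by (apply Rabs_lt_1_of_01, Hx).
  apply euler; [exact Hc | apply Rabs_lt_1_of_01, Hx].
Qed.

Lemma hyp2F1_pfaff a b c x : 0 < c -> x < 0 ->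
  hyp2F1 a b c x = Rpower (1 - x) (- a) * hypseries a (c - b) c (x / (x - 1)).
Proof.
  intros Hc Hx. unfold hyp2F1. destruct (Rlt_dec (Rabs x) 1) as [H|H].
  - apply pfaff; [exact Hc|]. pose proof (Rabs_def2 _ _ H). lra.
  - destruct (Rlt_dec x 0); [reflexivity | lra].
Qed.

(* Pfaff's transformation in the other numerator parameter; for x <= -1 this is
   Euler's transformation at x/(x-1), composed with the defining one. *)
Lemma hyp2F1_pfaff_comm a b c x : 0 < c -> x < 0 ->
  hyp2F1 a b c x = Rpower (1 - x) (- b) * hypseries b (c - a) c (x / (x - 1)).
Proof.
  intros Hc Hx. unfold hyp2F1. destruct (Rlt_dec (Rabs x) 1) as [H|H].
  - rewrite hypseries_comm. apply pfaff; [exact Hc|]. pose proof (Rabs_def2 _ _ H). lra.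
  - destruct (Rlt_dec x 0) as [_|]; [|lra].
    pose proof (pfaff_arg_range x Hx) as Hz.
    rewrite euler by (auto; apply Rabs_lt_1_of_01, Hz).
    replace (1 - x / (x - 1)) with (/ (1 - x)) by (field; split; lra).
    rewrite Rpower_Rinv_base by lra. replace (c - (c - b)) with b by ring.
    rewrite hypseries_comm, <- Rmult_assoc, <- Rpower_plus. f_equal. f_equal. ring.
Qed.

(** * Log-convexity in the parameters *)

Lemma convex_set_pos : convex_set (fun s => 0 < s).
Proof. intros s1 s2 t H1 H2 Ht. destruct (Req_dec t 0) as [->|Ht0]; nra. Qed.

Lemma convex_set_nonneg : convex_set (fun s => 0 <= s).
Proof. intros s1 s2 t H1 H2 Ht. nra. Qed.

Lemma log_convex_on_hyp2F1_c a b x :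
  (a > 0 /\ b > 0 /\ 0 < x < 1) \/ (a < 0 /\ x < 0 /\ b > 0) \/ (b < 0 /\ x < 0 /\ a > 0) ->
  log_convex_on (fun c => 0 < c) (fun c => hyp2F1 a b c x).
Proof.
  pose proof convex_set_pos as HP.
  intros [[Ha [Hb Hx]]|[[Ha [Hx Hb]]|[Hb [Hx Ha]]]].
  - apply log_convex_on_ext with (f := fun s => hypseries a b (s + 0) x); auto.
    { intros s Hs. rewrite hyp2F1_unit_disc, Rplus_0_r by (apply Rabs_lt_1_of_01, Hx). reflexivity. }
    apply log_convex_on_hypseries_shift_c; auto. intros; lra.
  - pose proof (pfaff_arg_range x Hx).
    apply log_convex_on_ext with (f := fun s =>
      Rpower (1 - x) (0 * s + - b) * hypseries b (s + - a) (s + 0) (x / (x - 1))); auto.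
    { intros s Hs. rewrite hyp2F1_pfaff_comm by auto. f_equal; f_equal; ring. }
    apply log_convex_on_mult; auto; [apply log_convex_on_Rpower_affine; lra|].
    apply log_convex_on_hypseries_shift_bc; auto; intros; lra.
  - pose proof (pfaff_arg_range x Hx).
    apply log_convex_on_ext with (f := fun s =>
      Rpower (1 - x) (0 * s + - a) * hypseries a (s + - b) (s + 0) (x / (x - 1))); auto.
    { intros s Hs. rewrite hyp2F1_pfaff by auto. f_equal; f_equal; ring. }
    apply log_convex_on_mult; auto; [apply log_convex_on_Rpower_affine; lra|].
    apply log_convex_on_hypseries_shift_bc; auto; intros; lra.
Qed.

Lemma log_convex_on_hyp2F1_bc_shift a b c x :
  (a > 0 /\ b > c /\ c > 0 /\ 0 < x < 1) \/ (a < 0 /\ b < c /\ c > 0 /\ 0 < x < 1) \/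
  (a > 0 /\ b < c /\ c > 0 /\ x < 0) ->
  log_convex_on (fun mu => 0 <= mu) (fun mu => hyp2F1 a (b + mu) (c + mu) x).
Proof.
  pose proof convex_set_nonneg as HP.
  intros [[Ha [Hb [Hc Hx]]]|[[Ha [Hb [Hc Hx]]]|[Ha [Hb [Hc Hx]]]]].
  - apply log_convex_on_ext with (f := fun s => hypseries a (s + b) (s + c) x); auto.
    { intros s Hs. rewrite hyp2F1_unit_disc by (apply Rabs_lt_1_of_01, Hx). f_equal; ring. }
    apply log_convex_on_hypseries_shift_bc; auto; intros; lra.
  - apply log_convex_on_ext with (f := fun s =>
      Rpower (1 - x) (0 * s + (c - a - b)) * hypseries (c - b) (s + (c - a)) (s + c) x); auto.
    { intros s Hs. rewrite hyp2F1_euler, hypseries_comm by lra. f_equal; f_equal; ring. }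
    apply log_convex_on_mult; auto; [apply log_convex_on_Rpower_affine; lra|].
    apply log_convex_on_hypseries_shift_bc; auto; intros; lra.
  - pose proof (pfaff_arg_range x Hx).
    apply log_convex_on_ext with (f := fun s =>
      Rpower (1 - x) (0 * s + - a) * hypseries a (c - b) (s + c) (x / (x - 1))); auto.
    { intros s Hs. rewrite hyp2F1_pfaff by lra. f_equal; f_equal; ring. }
    apply log_convex_on_mult; auto; [apply log_convex_on_Rpower_affine; lra|].
    apply log_convex_on_hypseries_shift_c; auto; intros; lra.
Qed.

Lemma log_convex_on_hyp2F1_abc_shift a b c x :
  (a < c /\ b >= c /\ c > 0 /\ x < 0) \/ (a < c /\ b < c /\ c > 0 /\ 0 < x < 1) ->
  log_convex_on (fun mu => 0 <= mu) (fun mu => hyp2F1 (a + mu) (b + mu) (c + mu) x).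
Proof.
  pose proof convex_set_nonneg as HP.
  intros [[Ha [Hb [Hc Hx]]]|[Ha [Hb [Hc Hx]]]].
  - pose proof (pfaff_arg_range x Hx).
    apply log_convex_on_ext with (f := fun s =>
      Rpower (1 - x) ((-1) * s + - b) * hypseries (c - a) (s + b) (s + c) (x / (x - 1))); auto.
    { intros s Hs. rewrite hyp2F1_pfaff_comm, hypseries_comm by lra. f_equal; f_equal; ring. }
    apply log_convex_on_mult; auto; [apply log_convex_on_Rpower_affine; lra|].
    apply log_convex_on_hypseries_shift_bc; auto; intros; lra.
  - apply log_convex_on_ext with (f := fun s =>
      Rpower (1 - x) ((-1) * s + (c - a - b)) * hypseries (c - a) (c - b) (s + c) x); auto.
    { intros s Hs. rewrite hyp2F1_euler by lra. f_equal; f_equal; ring. }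
    apply log_convex_on_mult; auto; [apply log_convex_on_Rpower_affine; lra|].
    apply log_convex_on_hypseries_shift_c; auto; intros; lra.
Qed.

(** * Negativity of the cross-difference coefficients *)

Section CrossDifference.

Variables (c d del : R).
Hypothesis Hc : 0 < c.
Hypothesis Hcd : c < d.
Hypothesis Hdel : 0 < del.

Let ratio g j := poch g j / poch (g + del) j.

Lemma ratio_pos g j : 0 < g -> 0 < ratio g j.
Proof. intros; unfold ratio; pos. Qed.

Lemma ratio_S g j : 0 < g -> ratio g (S j) = ratio g j * ((g + INR j) / (g + del + INR j)).
Proof.
  intros Hg. unfold ratio. simpl poch. assert (0 < poch (g + del) j) by pos.
  pose proof (pos_INR j). field. split; lra.
Qed.

Lemma ratio_antitone g k m : 0 < g -> (k <= m)%nat -> ratio g m <= ratio g k.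
Proof.
  intros Hg H. induction H as [|m H IH]; [lra|].
  rewrite ratio_S by exact Hg. pose proof (ratio_pos g m Hg). pose proof (pos_INR m).
  assert (0 < (g + INR m) / (g + del + INR m)) by pos.
  assert ((g + INR m) / (g + del + INR m) <= 1).
  { apply Rmult_le_reg_r with (g + del + INR m); [lra|].
    unfold Rdiv. rewrite Rmult_assoc, Rinv_l by lra. lra. }
  nra.
Qed.

Lemma ratio_le j : ratio c j <= ratio d j /\ ((1 <= j)%nat -> ratio c j < ratio d j).
Proof.
  induction j as [|j [IH _]].
  - unfold ratio; simpl. split; [lra | lia].
  - rewrite !ratio_S by lra. pose proof (ratio_pos c j Hc). pose proof (pos_INR j).
    assert ((c + INR j) / (c + del + INR j) < (d + INR j) / (d + del + INR j)).
    { apply Rmult_lt_reg_r with ((c + del + INR j) * (d + del + INR j)); [pos|].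
      replace ((c + INR j) / (c + del + INR j) * ((c + del + INR j) * (d + del + INR j)))
        with ((c + INR j) * (d + del + INR j)) by (field; lra).
      replace ((d + INR j) / (d + del + INR j) * ((c + del + INR j) * (d + del + INR j)))
        with ((d + INR j) * (c + del + INR j)) by (field; lra).
      nra. }
    assert (0 < (c + INR j) / (c + del + INR j)) by pos.
    split; intros; nra.
Qed.

Lemma poch_cross_le k m : (k <= m)%nat -> poch c m * poch d k <= poch d m * poch c k.
Proof.
  intros H. induction H as [|m H IH]; [lra|]. simpl poch. pose proof (pos_INR m).
  assert (0 < poch c m) by pos. assert (0 < poch d k) by pos. assert (0 < poch c k) by pos.
  apply Rle_trans with ((c + INR m) * (poch d m * poch c k)).
  - replace (poch c m * (c + INR m) * poch d k) with ((c + INR m) * (poch c m * poch d k)) by ring.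
    apply Rmult_le_compat_l; lra.
  - replace (poch d m * (d + INR m) * poch c k) with ((d + INR m) * (poch d m * poch c k)) by ring.
    apply Rmult_le_compat_r; [left; pos | lra].
Qed.

(* With P, Q the two pure cross terms (P <= Q), the claim reads
   ratio c k P + ratio c m Q < ratio d k Q + ratio d m P. *)
Lemma cross_pair_lt_ordered k m : (k <= m)%nat -> (1 <= m)%nat ->
  / (poch (c + del) k * poch d m) + / (poch (c + del) m * poch d k) <
  / (poch (d + del) k * poch c m) + / (poch (d + del) m * poch c k).
Proof.
  intros Hkm Hm.
  set (P := / (poch c k * poch d m)). set (Q := / (poch c m * poch d k)).
  assert (0 < P) by (unfold P; pos). assert (0 < Q) by (unfold Q; pos).
  assert (P <= Q).
  { unfold P, Q. apply Rinv_le_contravar; [pos|]. pose proof (poch_cross_le k m Hkm). lra. }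
  assert (0 < poch c k) by pos. assert (0 < poch c m) by pos.
  assert (0 < poch d k) by pos. assert (0 < poch d m) by pos.
  assert (0 < poch (c + del) k) by pos. assert (0 < poch (c + del) m) by pos.
  assert (0 < poch (d + del) k) by pos. assert (0 < poch (d + del) m) by pos.
  replace (/ (poch (c + del) k * poch d m)) with (ratio c k * P) by (unfold ratio, P; field; lra).
  replace (/ (poch (c + del) m * poch d k)) with (ratio c m * Q) by (unfold ratio, Q; field; lra).
  replace (/ (poch (d + del) k * poch c m)) with (ratio d k * Q) by (unfold ratio, Q; field; lra).
  replace (/ (poch (d + del) m * poch c k)) with (ratio d m * P) by (unfold ratio, P; field; lra).
  destruct (ratio_le k) as [Hk _]. destruct (ratio_le m) as [_ Hm'].
  specialize (Hm' Hm). pose proof (ratio_antitone c k m Hc Hkm).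
  pose proof (ratio_antitone d k m ltac:(lra) Hkm).
  destruct (Rle_lt_dec (ratio d m) (ratio c k)); nra.
Qed.

Lemma cross_pair_lt k m : (1 <= k + m)%nat ->
  / (poch (c + del) k * poch d m) + / (poch (c + del) m * poch d k) <
  / (poch (d + del) k * poch c m) + / (poch (d + del) m * poch c k).
Proof.
  intros H. destruct (Nat.le_gt_cases k m).
  - apply cross_pair_lt_ordered; lia.
  - pose proof (cross_pair_lt_ordered m k ltac:(lia) ltac:(lia)). lra.
Qed.

End CrossDifference.

Lemma sum_f_R0_reflect (f : nat -> R) n : sum_f_R0 f n = sum_f_R0 (fun k => f (n - k)%nat) n.
Proof.
  revert f; induction n as [|n IH]; intros f; [reflexivity|].
  rewrite decomp_sum by lia. simpl Init.Nat.pred. rewrite (IH (fun k => f (S k))), tech5.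
  rewrite Nat.sub_diag, Rplus_comm. f_equal. apply sum_eq. intros i Hi. f_equal. lia.
Qed.

Lemma sum_f_R0_neg (f : nat -> R) n : (forall k, (k <= n)%nat -> f k < 0) -> sum_f_R0 f n < 0.
Proof.
  induction n as [|n IH]; intros H; [apply H; lia|]. rewrite tech5.
  pose proof (H (S n) (le_n _)). assert (sum_f_R0 f n < 0) by (apply IH; intros; apply H; lia).
  lra.
Qed.

Lemma is_series_PS_mult p q x : Rbar_le 1 (CV_radius p) -> Rbar_le 1 (CV_radius q) -> Rabs x < 1 ->
  is_series (fun n => PS_mult p q n * x ^ n) (PSeries p x * PSeries q x).
Proof.
  intros Hp Hq Hx. rewrite <- PSeries_mult by (apply Rbar_lt_radius; auto).
  apply is_pseries_R, PSeries_correct, ex_pseries_mult; apply Rbar_lt_radius; auto.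
Qed.

(* In the n-th coefficient, pair the k-th and (n-k)-th Cauchy-product terms. *)
Lemma PS_mult_cross_difference_neg a b c d del n : 0 < a -> 0 < b -> 0 < c -> c < d -> 0 < del ->
  (1 <= n)%nat ->
  PS_mult (hypcoef a b (c + del)) (hypcoef a b d) n
  - PS_mult (hypcoef a b (d + del)) (hypcoef a b c) n < 0.
Proof.
  intros Ha Hb Hc Hcd Hdel Hn.
  set (A := fun j => poch a j * poch b j / INR (Factorial.fact j)).
  assert (HA : forall j, 0 < A j) by (intros; unfold A; pos).
  set (T := fun k m => A k * A m *
    (/ (poch (c + del) k * poch d m) - / (poch (d + del) k * poch c m))).
  replace (PS_mult (hypcoef a b (c + del)) (hypcoef a b d) n
           - PS_mult (hypcoef a b (d + del)) (hypcoef a b c) n)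
    with (/ 2 * sum_f_R0 (fun k => T k (n - k)%nat + T (n - k)%nat k) n).
  - assert (sum_f_R0 (fun k => T k (n - k)%nat + T (n - k)%nat k) n < 0); [|lra].
    apply sum_f_R0_neg. intros k Hk. unfold T.
    pose proof (cross_pair_lt c d del Hc Hcd Hdel k (n - k) ltac:(lia)).
    pose proof (HA k). pose proof (HA (n - k)%nat).
    assert (0 < A k * A (n - k)%nat) by pos. nra.
  - unfold PS_mult. rewrite <- minus_sum, plus_sum.
    rewrite (sum_f_R0_reflect (fun k => T (n - k)%nat k)).
    replace (sum_f_R0 (fun k => T (n - (n - k))%nat (n - k)%nat) n)
      with (sum_f_R0 (fun k => T k (n - k)%nat) n)
      by (apply sum_eq; intros i Hi; f_equal; lia).
    replace (/ 2 * (sum_f_R0 (fun k => T k (n - k)%nat) n + sum_f_R0 (fun k => T k (n - k)%nat) n))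
      with (sum_f_R0 (fun k => T k (n - k)%nat) n) by field.
    apply sum_eq. intros k Hk. unfold T, A, hypcoef.
    assert (0 < poch (c + del) k) by pos. assert (0 < poch (d + del) k) by pos.
    assert (0 < poch c (n - k)) by pos. assert (0 < poch d (n - k)) by pos.
    pose proof (INR_fact_lt_0 k). pose proof (INR_fact_lt_0 (n - k)).
    field. repeat split; lra.
Qed.

Lemma hyp2F1_cross_difference_series a b c d del : d > c -> c > 0 -> a > 0 -> b > 0 -> del > 0 ->
  exists e : nat -> R,
    e O = 0 /\ (forall n : nat, (1 <= n)%nat -> e n < 0) /\
    (forall x : R, Rabs x < 1 ->
       is_series (fun n => e n * x ^ n)
         (hyp2F1 a b (c + del) x * hyp2F1 a b d x - hyp2F1 a b (d + del) x * hyp2F1 a b c x)).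
Proof.
  intros Hdc Hc Ha Hb Hdel.
  exists (fun n => PS_mult (hypcoef a b (c + del)) (hypcoef a b d) n
              - PS_mult (hypcoef a b (d + del)) (hypcoef a b c) n).
  split; [|split].
  - unfold PS_mult. simpl. rewrite !hypcoef_0. ring.
  - intros n Hn. apply PS_mult_cross_difference_neg; auto.
  - intros x Hx. rewrite !hyp2F1_unit_disc by exact Hx.
    assert (HR : forall g, 0 < g -> Rbar_le 1 (CV_radius (hypcoef a b g)))
      by (intros; apply CV_radius_hypcoef; auto).
    eapply is_series_ext; [|exact (is_series_minus _ _ _ _
      (is_series_PS_mult _ _ x (HR (c + del) ltac:(lra)) (HR d ltac:(lra)) Hx)
      (is_series_PS_mult _ _ x (HR (d + del) ltac:(lra)) (HR c ltac:(lra)) Hx))].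
    intros n. change plus with Rplus; change opp with Ropp. apply (@eq_sym R). ring.
Qed.

Theorem theorem8 :
  (* (a) *)
  (forall a b c d delta : R,
     d > c -> c > 0 -> a > 0 -> b > 0 -> delta > 0 ->
     exists e : nat -> R,
       e O = 0 /\ (forall n : nat, (1 <= n)%nat -> e n < 0) /\
       (forall x : R, Rabs x < 1 ->
          is_series (fun n => e n * x ^ n)
            (hyp2F1 a b (c + delta) x * hyp2F1 a b d x
             - hyp2F1 a b (d + delta) x * hyp2F1 a b c x))) /\
  (* (b) *)
  (forall a b x : R,
     ((a > 0 /\ b > 0 /\ 0 < x < 1) \/
      (a < 0 /\ x < 0 /\ b > 0) \/
      (b < 0 /\ x < 0 /\ a > 0)) ->
     log_convex_on (fun c => 0 < c) (fun c => hyp2F1 a b c x)) /\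
  (* (c) *)
  (forall a b c x : R,
     ((a > 0 /\ b > c /\ c > 0 /\ 0 < x < 1) \/
      (a < 0 /\ b < c /\ c > 0 /\ 0 < x < 1) \/
      (a > 0 /\ b < c /\ c > 0 /\ x < 0)) ->
     log_convex_on (fun mu => 0 <= mu) (fun mu => hyp2F1 a (b + mu) (c + mu) x)) /\
  (* (d) *)
  (forall a b c x : R,
     ((a < c /\ b >= c /\ c > 0 /\ x < 0) \/
      (a < c /\ b < c /\ c > 0 /\ 0 < x < 1)) ->
     log_convex_on (fun mu => 0 <= mu) (fun mu => hyp2F1 (a + mu) (b + mu) (c + mu) x)).
Proof.
  split; [|split; [|split]].
  - exact hyp2F1_cross_difference_series.
  - exact log_convex_on_hyp2F1_c.
  - exact log_convex_on_hyp2F1_bc_shift.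
  - exact log_convex_on_hyp2F1_abc_shift.
Qed.
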